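(* Assume the following setup. Let $a,x,u,v$ be integers with $3\le a\le x$, $0\le u\le a-3$, and $u+2\le v\le\min\left(a-1,\frac{a(x-1)}{x}\right)$. Let $\lambda$ consist of $ua+v$ parts equal to $x$ and $v-(u+1)$ parts equal to $ax$, and let $n=|\lambda|$, so that $n=x[(a+1)(v-1)+1]$ and $n-1=xa(v-1)+xv-1$. For $0\le i\le n-2$ write uniquely \[ i=\frac{n}{x}r_i+(v-1)p_i+q_i \] with integers $0\le r_i<x$, $0\le p_i<a+2$, $0\le q_i<v-1$, $0\le (v-1)p_i+q_i<n/x$ (so $p_i=a+1$ implies $q_i=0$). Define $s_{1,i}=ix-(n-1)\left\lfloor\frac{ix}{n-1}\right\rfloor$. Then for every $0\le i\le n-2$, \[ s_{1,i}=r_i+x\big[(v-1)p_i+q_i\big]. \] *)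

From mathcomp Require Import all_boot.

Definition lam (a x u v : nat) : seq nat :=
  nseq (u * a + v) x ++ nseq (v - u.+1) (a * x).

Definition lam_size (a x u v : nat) : nat := sumn (lam a x u v).

Definition s1 (n x i : nat) : nat := i * x - (n - 1) * ((i * x) %/ (n - 1)).

From mathcomp Require Import all_boot zify.

(* Here n = x N with N = (a + 1)(v - 1) + 1 = n / x.  Writing i = N r + m with
   m < N gives i x = r (n - 1) + (r + x m), and i < n - 1 forces
   r + x m < n - 1, so r + x m is the remainder of i x modulo n - 1.  The
   digits p, q only spell out m = (v - 1) p + q. *)

Lemma s1_modn n x i : s1 n x i = (i * x) %% (n - 1).
Proof. by rewrite /s1 {1}(divn_eq (i * x) (n - 1)) mulnC addKn. Qed.

Lemma lam_size_eq a x u v :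
  u < v -> lam_size a x u v = x * ((a + 1) * (v - 1) + 1).
Proof.
rewrite /lam_size /lam sumn_cat !sumn_nseq => /subnKC <-.
set k := v - u.+1; rewrite addKn addSn subn1 /=.
nia.
Qed.

Lemma mixed_radix_exists N w x i : 0 < w -> i < N * x ->
  exists r p q, [/\ i = N * r + w * p + q, r < x, q < w & w * p + q < N].
Proof.
move=> w_gt0 ltiNx; have N_gt0 : 0 < N by case: N ltiNx => //; rewrite mul0n.
exists (i %/ N), (i %% N %/ w), (i %% N %% w).
rewrite -addnA [w * _]mulnC -divn_eq mulnC -divn_eq.
by split; rewrite ?ltn_pmod // ltn_divLR // mulnC.
Qed.

Lemma swap_digits_lt x N r m :
  m < N -> r < x -> N * r + m < N * x - 1 -> r + x * m < x * N - 1.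
Proof.
move=> ltmN ltrx ltiNx.
have [ltm1N | gem1N] := ltnP m.+1 N.
  have : x * m.+2 <= x * N by rewrite leq_mul2l ltm1N orbT.
  rewrite mulnS mulnS; lia.
have def_N : N = m.+1 by lia.
have : N * r.+1 < N * x by rewrite mulnS; lia.
rewrite ltn_mul2l def_N mulnS; lia.
Qed.

Lemma s1_swap_digits x N r m : m < N -> r < x ->
  N * r + m < N * x - 1 -> s1 (x * N) x (N * r + m) = r + x * m.
Proof.
move=> ltmN ltrx ltiNx; rewrite s1_modn.
have xN_gt0 : 0 < x * N.
  by rewrite muln_gt0 (leq_ltn_trans _ ltmN) ?(leq_ltn_trans _ ltrx).
have -> : (N * r + m) * x = r * (x * N - 1) + (r + x * m).
  by rewrite mulnBr muln1 addnA subnK ?leq_pmulr //; nia.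
by rewrite modnMDl modn_small // swap_digits_lt.
Qed.

Theorem lemma4p5 (a x u v : nat) :
  3 <= a -> a <= x -> u <= a - 3 -> u + 2 <= v -> v <= a - 1 ->
  v * x <= a * (x - 1) ->
  let n := lam_size a x u v in
  forall i : nat, i <= n - 2 ->
    (exists r p q : nat,
       [/\ i = (n %/ x) * r + (v - 1) * p + q,
           r < x, p < a + 2, q < v - 1 & (v - 1) * p + q < n %/ x]) /\
    (forall r p q : nat,
       i = (n %/ x) * r + (v - 1) * p + q ->
       r < x -> p < a + 2 -> q < v - 1 -> (v - 1) * p + q < n %/ x ->
       s1 n x i = r + x * ((v - 1) * p + q)).
Proof.
move=> a_ge3 le_ax _ le_uv _ _ n i lein.
have w_gt0 : 0 < v - 1 by lia.
set w := v - 1 in w_gt0 *; set N := (a + 1) * w + 1.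
have def_n : n = x * N by rewrite /n lam_size_eq; lia.
have le_xn : x <= n by rewrite def_n leq_pmulr // /N addn1.
have ltin1 : i < N * x - 1 by rewrite mulnC -def_n; lia.
have -> : n %/ x = N by rewrite def_n mulKn //; lia.
split.
  have [|r [p [q [def_i ltrx ltqw ltmN]]]] := mixed_radix_exists N w x i w_gt0.
    by lia.
  exists r, p, q; split => //.
  have : w * p < w * (a + 2) by rewrite /N in ltmN; lia.
  by rewrite ltn_mul2l w_gt0.
move=> r p q def_i ltrx _ _ ltmN.
by rewrite def_n def_i -addnA s1_swap_digits // addnA -def_i.
Qed.
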